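(* Let $z_1,\dots,z_n$ and $\zeta_1,\dots,\zeta_{n+1}$ be points of $\overline E\cap U$ such that $V(z_1,\dots,z_n)=V_n(E)$ and $V(\zeta_1,\dots,\zeta_{n+1})=V_{n+1}(E)$. Then \[ \mu(\zeta_1,\dots,\zeta_{n+1})\,M(z_1,\dots,z_n)\le (n+1)\|q\|_{\infty,E}, \] where $\|q\|_{\infty,E}=\sup_{z\in E}|q(z)|$.
   Context: $U$ is the open unit disc and $E\subset U$ is a set with infinitely many points whose set $E_0$ of nontangential limit points has Lebesgue measure zero on $\partial U$ (a point $\zeta\in\partial U$ is a nontangential limit point of $E$ if some sequence $(w_n)$ in $E$ satisfies $w_n\to\zeta$ and $|w_n-\zeta|=O(1-|w_n|)$). The function $q$: if $\overline E\cap\partial U=\emptyset$, $q\equiv1$; otherwise $q$ is holomorphic on $U$ with $0<|q|<1$ on $U$ and $\lim_{z\in E,|z|\to1}q(z)=0$, normalized so that $\sup_U|q|=1$. For $Z_n=(z_1,\dots,z_n)$: $B(Z_n,z)=\prod_{j=1}^n\frac{z-z_j}{1-\overline{z_j}z}$, $B_k(Z_n,z)=\prod_{j\ne k}\frac{z-z_j}{1-\overline{z_j}z}$, $B_q(Z_n,z)=B(Z_n,z)q(z)$ (an empty product equals $1$), $Z_{j-1}=(z_1,\dots,z_{j-1})$. Define $V(Z_n)=\prod_{j=1}^n|B_q(Z_{j-1},z_j)|$, $\mu(Z_n)=\sum_{j=1}^n|B_j(Z_n,z_j)|^{-1}$, $M(Z_n)=\sup_{z\in E}|B_q(Z_n,z)|$,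 and $V_n(E)=\sup_{Z_n\in E^n}V(Z_n)$. *)

From Stdlib Require Import Reals Lra.
From Coquelicot Require Import Coquelicot.
Open Scope R_scope.

Definition inU (z : C) : Prop := Cmod z < 1.

Definition cl (E : C -> Prop) (z : C) : Prop :=
  forall eps : R, 0 < eps -> exists w, E w /\ Cmod (w - z)%C < eps.

Definition infinite_set (E : C -> Prop) : Prop :=
  forall l : list C, exists z, E z /\ ~ List.In z l.

Definition nt_limit_point (E : C -> Prop) (zeta : C) : Prop :=
  Cmod zeta = 1 /\
  exists w : nat -> C, (forall k, E (w k)) /\
    (forall eps, 0 < eps -> exists N, forall k, (N <= k)%nat -> Cmod (w k - zeta)%C < eps) /\
    (exists K N, forall k, (N <= k)%nat -> Cmod (w k - zeta)%C <= K * (1 - Cmod (w k))).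

Definition null_R (S : R -> Prop) : Prop :=
  forall eps, 0 < eps -> exists a b : nat -> R,
    (forall k, a k <= b k) /\
    (forall x, S x -> exists k, a k <= x <= b k) /\
    (forall N, sum_f_R0 (fun k => b k - a k) N <= eps).

Definition null_circle (A : C -> Prop) : Prop :=
  null_R (fun t => A (cos t, sin t)).

Definition holo_U (f : C -> C) : Prop :=
  forall z, inU z -> ex_derive (K := C_AbsRing) (V := C_NormedModule) f z.

Definition admissible (E : C -> Prop) (q : C -> C) : Prop :=
  (forall z, E z -> inU z) /\
  infinite_set E /\
  null_circle (nt_limit_point E) /\
  ((~ exists zeta, Cmod zeta = 1 /\ cl E zeta) -> forall z, q z = 1%C) /\
  ((exists zeta, Cmod zeta = 1 /\ cl E zeta) ->
     holo_U q /\
     (forall z, inU z -> 0 < Cmod (q z) < 1) /\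
     (forall eps, 0 < eps -> exists delta, 0 < delta /\
        forall z, E z -> 1 - delta < Cmod z -> Cmod (q z) < eps) /\
     is_lub (fun r => exists z, inU z /\ r = Cmod (q z)) 1).

Definition bfac (a z : C) : C := ((z - a) / (1 - Cconj a * z))%C.

(* B(Z_n, z), points Z 0, ..., Z (n-1) *)
Fixpoint Bl (Z : nat -> C) (n : nat) (z : C) : C :=
  match n with
  | O => 1%C
  | S m => (Bl Z m z * bfac (Z m) z)%C
  end.

Fixpoint Blk (Z : nat -> C) (n k : nat) (z : C) : C :=
  match n with
  | O => 1%C
  | S m => if Nat.eqb m k then Blk Z m k z else (Blk Z m k z * bfac (Z m) z)%C
  end.

Definition Bq (q : C -> C) (Z : nat -> C) (n : nat) (z : C) : C := (Bl Z n z * q z)%C.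

Fixpoint Vol (q : C -> C) (Z : nat -> C) (n : nat) : R :=
  match n with
  | O => 1
  | S m => Vol q Z m * Cmod (Bq q Z m (Z m))
  end.

Fixpoint mu_aux (Z : nat -> C) (n m : nat) : R :=
  match m with
  | O => 0
  | S m' => mu_aux Z n m' + / Cmod (Blk Z n m' (Z m'))
  end.
Definition mu (Z : nat -> C) (n : nat) : R := mu_aux Z n n.

Definition Msup (E : C -> Prop) (q : C -> C) (Z : nat -> C) (n : nat) : R :=
  real (Lub_Rbar (fun r => exists z, E z /\ r = Cmod (Bq q Z n z))).

Definition Vn (E : C -> Prop) (q : C -> C) (n : nat) : R :=
  real (Lub_Rbar (fun r => exists Z : nat -> C,
          (forall j, (j < n)%nat -> E (Z j)) /\ r = Vol q Z n)).

Definition qnorm (E : C -> Prop) (q : C -> C) : R :=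
  real (Lub_Rbar (fun r => exists z, E z /\ r = Cmod (q z))).

From Stdlib Require Import Reals Lra Lia Classical List.
From Coquelicot Require Import Coquelicot.
Open Scope R_scope.

(* V(Z) = prod_j |q(z_j)| * prod_{i<j} |b_{z_i}(z_j)| is symmetric in
   the points, so deleting zeta_k gives
     V(zeta) = |q(zeta_k)| |B_k(zeta, zeta_k)| V(zeta without zeta_k),
   while appending w to z gives V(z, w) = V(z) |B_q(z, w)|.  Since V is continuous on
   U^n, V <= V_n on (cl E cap U)^n; by extremality, for w in E,
     V_n |B_q(z, w)| <= V_{n+1} <= |q(zeta_k)| |B_k(zeta, zeta_k)| V_n,
   and V_n > 0 because E is infinite.  Hence |B_q(z, w)| / |B_k(zeta, zeta_k)| <=
   |q(zeta_k)| <= ||q||_E for every k; summing over k and taking the supremum over w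
   gives the claim. *)

Lemma Cmod_Cinv (x : C) : Cmod (/ x)%C = / Cmod x.
Proof.
  destruct (Ceq_dec x 0) as [-> | Hx].
  - replace (/ 0)%C with (RtoC 0).
    + rewrite Cmod_0, Rinv_0. reflexivity.
    + apply injective_projections; simpl; unfold Rdiv; ring.
  - apply Cmod_inv, Hx.
Qed.

Lemma Cconj_Blaschke_den (a b : C) : Cconj (1 - Cconj a * b)%C = (1 - Cconj b * a)%C.
Proof. destruct a, b. apply injective_projections; simpl; ring. Qed.

Lemma Blaschke_den_neq_0 (a b : C) : inU a -> inU b -> (1 - Cconj a * b)%C <> 0%C.
Proof.
  unfold inU. intros Ha Hb H.
  assert (H1 : (Cconj a * b)%C = 1%C).
  { replace (Cconj a * b)%C with (1 - (1 - Cconj a * b))%C by ring. rewrite H. ring. }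
  apply (f_equal Cmod) in H1. rewrite Cmod_mult, Cmod_conj, Cmod_1 in H1.
  pose proof (Cmod_ge_0 a). pose proof (Cmod_ge_0 b). nra.
Qed.

Lemma Cmod_bfac (a b : C) : Cmod (bfac a b) = Cmod (b - a)%C * / Cmod (1 - Cconj a * b)%C.
Proof. unfold bfac, Cdiv. rewrite Cmod_mult, Cmod_Cinv. reflexivity. Qed.

Lemma Cmod_bfac_sym (a b : C) : Cmod (bfac a b) = Cmod (bfac b a).
Proof.
  rewrite !Cmod_bfac, <- (Cmod_conj (1 - Cconj a * b)%C), Cconj_Blaschke_den.
  replace (b - a)%C with (- (a - b))%C by ring. rewrite Cmod_opp. reflexivity.
Qed.

Lemma Cmod_bfac_le_1 (a b : C) : inU a -> inU b -> Cmod (bfac a b) <= 1.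
Proof.
  intros Ha Hb. rewrite Cmod_bfac.
  assert (Hden : 0 < Cmod (1 - Cconj a * b)%C)
    by (apply Cmod_gt_0, Blaschke_den_neq_0; assumption).
  assert (Ha2 : Re a ^ 2 + Im a ^ 2 < 1)
    by (rewrite <- Cmod2_alt; unfold inU in Ha; pose proof (Cmod_ge_0 a); nra).
  assert (Hb2 : Re b ^ 2 + Im b ^ 2 < 1)
    by (rewrite <- Cmod2_alt; unfold inU in Hb; pose proof (Cmod_ge_0 b); nra).
  (* |1 - conj(a) b|^2 - |b - a|^2 = (1 - |a|^2) (1 - |b|^2) *)
  assert (Hsq : Cmod (b - a)%C ^ 2 <= Cmod (1 - Cconj a * b)%C ^ 2).
  { rewrite !Cmod2_alt. destruct a as [a1 a2], b as [b1 b2]. unfold Re, Im in *; simpl in *.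
    assert (0 <= (1 - (a1 ^ 2 + a2 ^ 2)) * (1 - (b1 ^ 2 + b2 ^ 2))) by (apply Rmult_le_pos; lra).
    nra. }
  apply Rle_div_l; [exact Hden|].
  pose proof (Cmod_ge_0 (b - a)%C). nra.
Qed.

Lemma Cmod_bfac_pos (a b : C) : inU a -> inU b -> a <> b -> 0 < Cmod (bfac a b).
Proof.
  intros Ha Hb Hab. rewrite Cmod_bfac. apply Rmult_lt_0_compat.
  - apply Cmod_gt_0. intro H. apply Hab.
    replace b with ((b - a) + a)%C by ring. rewrite H. ring.
  - apply Rinv_0_lt_compat, Cmod_gt_0, Blaschke_den_neq_0; assumption.
Qed.

Section BlaschkeProducts.

Variable Z : nat -> C.

Lemma Bl_ext (W : nat -> C) m x :
  (forall j, (j < m)%nat -> Z j = W j) -> Bl Z m x = Bl W m x.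
Proof.
  induction m as [|m IH]; intros H; simpl; [reflexivity|].
  rewrite IH by (intros j Hj; apply H; lia). rewrite H by lia. reflexivity.
Qed.

Lemma Blk_S_neq m k x : m <> k -> Blk Z (S m) k x = (Blk Z m k x * bfac (Z m) x)%C.
Proof. intros H. simpl. rewrite (proj2 (Nat.eqb_neq m k) H). reflexivity. Qed.

Lemma Blk_Bl m k x : (m <= k)%nat -> Blk Z m k x = Bl Z m x.
Proof.
  induction m as [|m IH]; intros H; [reflexivity|].
  rewrite Blk_S_neq, IH by lia. reflexivity.
Qed.

Lemma Blk_S_diag k x : Blk Z (S k) k x = Bl Z k x.
Proof.
  change (Blk Z (S k) k x)
    with (if Nat.eqb k k then Blk Z k k x else (Blk Z k k x * bfac (Z k) x)%C).
  rewrite Nat.eqb_refl. apply Blk_Bl. lia.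
Qed.

Lemma Bl_Blk m k x : (k < m)%nat -> Bl Z m x = (Blk Z m k x * bfac (Z k) x)%C.
Proof.
  induction m as [|m IH]; intros H; [lia|].
  destruct (Nat.eq_dec m k) as [-> | Hmk].
  - rewrite Blk_S_diag. reflexivity.
  - rewrite Blk_S_neq by exact Hmk. simpl. rewrite IH by lia. ring.
Qed.

Lemma Cmod_Bl_le_1 m x :
  (forall i, (i < m)%nat -> inU (Z i)) -> inU x -> Cmod (Bl Z m x) <= 1.
Proof.
  intros HZ Hx. induction m as [|m IH]; simpl.
  - rewrite Cmod_1. lra.
  - rewrite Cmod_mult.
    assert (H1 := IH (fun i Hi => HZ i ltac:(lia))).
    assert (H2 := Cmod_bfac_le_1 _ _ (HZ m ltac:(lia)) Hx).
    pose proof (Cmod_ge_0 (Bl Z m x)). pose proof (Cmod_ge_0 (bfac (Z m) x)). nra.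
Qed.

Lemma Cmod_Bl_pos m x :
  (forall i, (i < m)%nat -> inU (Z i) /\ Z i <> x) -> inU x -> 0 < Cmod (Bl Z m x).
Proof.
  intros HZ Hx. induction m as [|m IH]; simpl.
  - rewrite Cmod_1. lra.
  - rewrite Cmod_mult. apply Rmult_lt_0_compat.
    + apply IH. intros i Hi. apply HZ. lia.
    + destruct (HZ m ltac:(lia)). apply Cmod_bfac_pos; assumption.
Qed.

End BlaschkeProducts.

Definition delete_pt (Z : nat -> C) (k : nat) : nat -> C :=
  fun i => if Nat.ltb i k then Z i else Z (S i).

Definition set_pt (Z : nat -> C) (n : nat) (w : C) : nat -> C :=
  fun j => if Nat.eqb j n then w else Z j.

Lemma delete_pt_lt Z k i : (i < k)%nat -> delete_pt Z k i = Z i.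
Proof. intros H. unfold delete_pt. rewrite (proj2 (Nat.ltb_lt i k) H). reflexivity. Qed.

Lemma delete_pt_ge Z k i : (k <= i)%nat -> delete_pt Z k i = Z (S i).
Proof. intros H. unfold delete_pt. rewrite (proj2 (Nat.ltb_ge i k) H). reflexivity. Qed.

Lemma Blk_delete_pt Z m k x : (k <= m)%nat -> Blk Z (S m) k x = Bl (delete_pt Z k) m x.
Proof.
  induction m as [|m IH]; intros Hk.
  - replace k with 0%nat by lia. reflexivity.
  - destruct (Nat.eq_dec k (S m)) as [-> | Hkm].
    + rewrite Blk_S_diag. apply Bl_ext. intros j Hj. rewrite delete_pt_lt by exact Hj. reflexivity.
    + rewrite Blk_S_neq, IH by lia. simpl Bl. rewrite (delete_pt_ge Z k m) by lia. reflexivity.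
Qed.

Lemma Vol_S q Z n : Vol q Z (S n) = Vol q Z n * (Cmod (Bl Z n (Z n)) * Cmod (q (Z n))).
Proof. simpl Vol at 1. unfold Bq. rewrite Cmod_mult. reflexivity. Qed.

Lemma Vol_ext q Z W n : (forall j, (j < n)%nat -> Z j = W j) -> Vol q Z n = Vol q W n.
Proof.
  induction n as [|n IH]; intros H; [reflexivity|].
  rewrite !Vol_S, IH, (Bl_ext Z W) by (intros j Hj; apply H; lia).
  rewrite H by lia. reflexivity.
Qed.

Lemma Vol_ge_0 q Z n : 0 <= Vol q Z n.
Proof.
  induction n as [|n IH]; simpl; [lra|].
  apply Rmult_le_pos; [exact IH | apply Cmod_ge_0].
Qed.

Lemma Vol_le_1 q Z n :
  (forall j, (j < n)%nat -> inU (Z j) /\ Cmod (q (Z j)) <= 1) -> Vol q Z n <= 1.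
Proof.
  induction n as [|n IH]; intros H; [simpl; lra|].
  rewrite Vol_S. destruct (H n ltac:(lia)) as [Hn Hq].
  assert (H1 := IH (fun j Hj => H j ltac:(lia))).
  assert (H2 := Cmod_Bl_le_1 Z n (Z n) (fun i Hi => proj1 (H i ltac:(lia))) Hn).
  pose proof (Vol_ge_0 q Z n). pose proof (Cmod_ge_0 (Bl Z n (Z n))).
  pose proof (Cmod_ge_0 (q (Z n))).
  assert (0 <= Cmod (Bl Z n (Z n)) * Cmod (q (Z n)) <= 1) by (split; nra). nra.
Qed.

Lemma Vol_pos q Z n :
  (forall j, (j < n)%nat -> inU (Z j) /\ 0 < Cmod (q (Z j))) ->
  (forall i j, (i < j < n)%nat -> Z i <> Z j) -> 0 < Vol q Z n.
Proof.
  induction n as [|n IH]; intros HZ Hinj; [simpl; lra|].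
  rewrite Vol_S. apply Rmult_lt_0_compat; [|apply Rmult_lt_0_compat].
  - apply IH; [intros j Hj; apply HZ; lia | intros i j Hij; apply Hinj; lia].
  - apply Cmod_Bl_pos; [|apply HZ; lia].
    intros i Hi. split; [apply HZ; lia | apply Hinj; lia].
  - apply HZ. lia.
Qed.

Lemma Vol_set_pt q Z n w : Vol q (set_pt Z n w) (S n) = Vol q Z n * Cmod (Bq q Z n w).
Proof.
  simpl Vol at 1. unfold Bq.
  rewrite (Vol_ext q (set_pt Z n w) Z), (Bl_ext (set_pt Z n w) Z);
    try (intros j Hj; unfold set_pt; rewrite (proj2 (Nat.eqb_neq j n)) by lia; reflexivity).
  unfold set_pt. rewrite Nat.eqb_refl. reflexivity.
Qed.

Lemma Vol_delete_last q Z n :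
  Vol q Z (S n) = Cmod (q (Z n)) * Cmod (Blk Z (S n) n (Z n)) * Vol q (delete_pt Z n) n.
Proof.
  assert (HZ : forall j, (j < n)%nat -> delete_pt Z n j = Z j) by (intros; apply delete_pt_lt; lia).
  rewrite Vol_S, Blk_S_diag, (Vol_ext q (delete_pt Z n) Z) by exact HZ. ring.
Qed.

(* The symmetry of V in its points, in the only form needed. *)
Lemma Vol_delete_pt q Z n k : (k <= n)%nat ->
  Vol q Z (S n) =
  Cmod (q (Z k)) * Cmod (Blk Z (S n) k (Z k)) * Vol q (delete_pt Z k) n.
Proof.
  revert k. induction n as [|n IH]; intros k Hk.
  - replace k with 0%nat by lia. apply Vol_delete_last.
  - destruct (Nat.eq_dec k (S n)) as [-> | Hkn]; [apply Vol_delete_last|].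
    rewrite (Vol_S q Z (S n)), (IH k) by lia.
    rewrite (Vol_S q (delete_pt Z k) n), delete_pt_ge by lia.
    rewrite (Bl_Blk Z (S n) k), (Blk_S_neq Z (S n) k), (Blk_delete_pt Z n k (Z (S n))) by lia.
    rewrite !Cmod_mult, (Cmod_bfac_sym (Z k)). ring.
Qed.

(* Coquelicot's complex derivative makes q continuous for the metric |w - z| on its domain,
   i.e. for the uniform structure of the absolute ring C, not for the canonical (product)
   structure C_UniformSpace; all continuity arguments are carried out for the former. *)
Notation Cabs := (AbsRing_UniformSpace C_AbsRing).
Notation Cabs_NM := (AbsRing_NormedModule C_AbsRing).
Notation Cabs2 := (prod_UniformSpace Cabs Cabs).
Notation Cabs_seq := (fct_UniformSpace nat Cabs).

Lemma continuous_Cconj (x : C) : @continuous Cabs Cabs Cconj x.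
Proof.
  intros P [eps HP]. exists eps. intros w Hw. apply HP.
  change (Cmod (Cconj w - Cconj x)%C < eps).
  rewrite <- Cminus_conj, Cmod_conj. exact Hw.
Qed.

Lemma continuous_Cmod_comp {U : UniformSpace} (f : U -> C) (x : U) :
  @continuous U Cabs f x -> continuous (fun y => Cmod (f y)) x.
Proof.
  intros Hf. apply (@continuous_comp U Cabs R_UniformSpace f (@norm _ Cabs_NM)).
  - exact Hf.
  - apply (filterlim_norm (V := Cabs_NM)).
Qed.

Lemma continuous_Cmod_bfac (a b : C) : inU a -> inU b ->
  @continuous Cabs2 R_UniformSpace (fun p => Cmod (bfac (fst p) (snd p))) (a, b).
Proof.
  intros Ha Hb.
  apply (continuous_ext
    (fun p : Cabs2 => Cmod (snd p - fst p)%C * / Cmod (1 - Cconj (fst p) * snd p)%C)).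
  { intros p. symmetry. apply Cmod_bfac. }
  apply (continuous_mult (U := Cabs2) (K := R_AbsRing)).
  - apply (continuous_Cmod_comp (U := Cabs2) (fun p => (snd p - fst p)%C)).
    apply (continuous_minus (U := Cabs2) (V := Cabs_NM) snd fst).
    + apply (continuous_snd (U := Cabs) (V := Cabs)).
    + apply (continuous_fst (U := Cabs) (V := Cabs)).
  - apply (continuous_comp (U := Cabs2) (V := R_UniformSpace)
             (fun p => Cmod (1 - Cconj (fst p) * snd p)%C) Rinv).
    + apply (continuous_Cmod_comp (U := Cabs2) (fun p => (1 - Cconj (fst p) * snd p)%C)).
      apply (continuous_minus (U := Cabs2) (V := Cabs_NM) (fun _ => RtoC 1)
               (fun p => Cconj (fst p) * snd p)%C).
      * apply continuous_const.
      * apply (continuous_mult (U := Cabs2) (K := C_AbsRing) (fun p => Cconj (fst p)) snd).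
        -- apply (@continuous_comp Cabs2 Cabs Cabs fst Cconj).
           ++ apply (continuous_fst (U := Cabs) (V := Cabs)).
           ++ apply continuous_Cconj.
        -- apply (continuous_snd (U := Cabs) (V := Cabs)).
    + apply continuous_Rinv. simpl.
      apply Rgt_not_eq, Cmod_gt_0, Blaschke_den_neq_0; assumption.
Qed.

Lemma continuous_eval (Z : nat -> C) (j : nat) : @continuous Cabs_seq Cabs (fun W => W j) Z.
Proof. intros P [eps HP]. exists eps. intros W HW. apply HP, HW. Qed.

Lemma continuous_Cmod_Bl (Z : nat -> C) m j :
  (forall i, (i < m)%nat -> inU (Z i)) -> inU (Z j) ->
  @continuous Cabs_seq R_UniformSpace (fun W => Cmod (Bl W m (W j))) Z.
Proof.
  intros HZ Hj. induction m as [|m IH]; [apply continuous_const|].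
  apply (continuous_ext (fun W : Cabs_seq => Cmod (Bl W m (W j)) * Cmod (bfac (W m) (W j)))).
  { intros W. simpl. rewrite Cmod_mult. reflexivity. }
  apply (continuous_mult (U := Cabs_seq) (K := R_AbsRing)).
  - apply IH. intros i Hi. apply HZ. lia.
  - apply (continuous_comp_2 (U := Cabs_seq) (V := Cabs) (W := Cabs)
             (fun W => W m) (fun W => W j) (fun a b => Cmod (bfac a b)));
      try apply continuous_eval.
    apply continuous_Cmod_bfac; [apply HZ; lia | exact Hj].
Qed.

Lemma continuous_Vol q (Z : nat -> C) n :
  (forall j, (j < n)%nat ->
     inU (Z j) /\ @continuous Cabs R_UniformSpace (fun x => Cmod (q x)) (Z j)) ->
  @continuous Cabs_seq R_UniformSpace (fun W => Vol q W n) Z.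
Proof.
  induction n as [|n IH]; intros HZ; [apply continuous_const|].
  apply (continuous_ext
    (fun W : Cabs_seq => Vol q W n * (Cmod (Bl W n (W n)) * Cmod (q (W n))))).
  { intros W. symmetry. apply Vol_S. }
  apply (continuous_mult (U := Cabs_seq) (K := R_AbsRing));
    [|apply (continuous_mult (U := Cabs_seq) (K := R_AbsRing))].
  - apply IH. intros j Hj. apply HZ. lia.
  - apply continuous_Cmod_Bl; intros; apply HZ; lia.
  - apply (@continuous_comp Cabs_seq Cabs R_UniformSpace (fun W => W n) (fun x => Cmod (q x))).
    + apply continuous_eval.
    + apply HZ. lia.
Qed.

Lemma real_Lub_Rbar_ub (S : R -> Prop) (B x : R) :
  (forall y, S y -> y <= B) -> S x -> x <= real (Lub_Rbar S).
Proof.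
  intros HB Sx. destruct (Lub_Rbar_correct S) as [Hub Hlub].
  destruct (Lub_Rbar S) as [l | |]; simpl.
  - exact (Hub x Sx).
  - destruct (Hlub (Finite B) HB).
  - destruct (Hub x Sx).
Qed.

Lemma Rmult_real_Lub_Rbar_le (S : R -> Prop) (c b x0 : R) :
  0 <= c -> S x0 -> (forall x, S x -> c * x <= b) -> c * real (Lub_Rbar S) <= b.
Proof.
  intros Hc Sx0 Hb. destruct (Rle_lt_or_eq_dec 0 c Hc) as [Hc' | <-].
  - assert (Hub : forall x, S x -> x <= b / c) by (intros x Sx; apply Rle_div_r; [lra|];
      rewrite Rmult_comm; apply Hb, Sx).
    destruct (Lub_Rbar_correct S) as [Hub' Hlub].
    destruct (Lub_Rbar S) as [l | |]; simpl.
    + assert (Hl : l <= b / c) by exact (Hlub (Finite (b / c)) Hub).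
      apply Rle_div_r in Hl; [lra | exact Hc'].
    + destruct (Hlub (Finite (b / c)) Hub).
    + destruct (Hub' x0 Sx0).
  - specialize (Hb x0 Sx0). lra.
Qed.

Lemma cl_of_mem (E : C -> Prop) w : E w -> cl E w.
Proof.
  intros Ew eps Heps. exists w. split; [exact Ew|].
  replace (w - w)%C with (RtoC 0) by ring. rewrite Cmod_0. exact Heps.
Qed.

Lemma cl_approx (E : C -> Prop) (Z : nat -> C) n d : 0 < d ->
  (forall j, (j < n)%nat -> cl E (Z j)) ->
  exists W, (forall j, (j < n)%nat -> E (W j)) /\ (forall t, Cmod (W t - Z t)%C < d).
Proof.
  intros Hd. induction n as [|n IH]; intros HZ.
  - exists Z. split; [intros; lia|].
    intros t. replace (Z t - Z t)%C with (RtoC 0) by ring. rewrite Cmod_0. exact Hd.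
  - destruct IH as [W [HWE HWd]]; [intros j Hj; apply HZ; lia|].
    destruct (HZ n ltac:(lia) d Hd) as [w [Ew Hw]].
    exists (set_pt W n w). unfold set_pt. split.
    + intros j Hj. destruct (Nat.eqb_spec j n); [exact Ew | apply HWE; lia].
    + intros t. destruct (Nat.eqb_spec t n) as [-> | _]; [exact Hw | apply HWd].
Qed.

Lemma infinite_set_distinct_pts (E : C -> Prop) n : infinite_set E ->
  exists W, (forall j, (j < n)%nat -> E (W j)) /\
            (forall i j, (i < j < n)%nat -> W i <> W j).
Proof.
  intros Hinf. induction n as [|n [W [HWE HWinj]]].
  - exists (fun _ => RtoC 0). split; intros; lia.
  - destruct (Hinf (map W (seq 0 n))) as [w [Ew Hw]].
    exists (set_pt W n w). unfold set_pt. split.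
    + intros j Hj. destruct (Nat.eqb_spec j n); [exact Ew | apply HWE; lia].
    + intros i j Hij.
      destruct (Nat.eqb_spec i n), (Nat.eqb_spec j n); try lia.
      * intros Heq. apply Hw. rewrite <- Heq. apply in_map, in_seq. lia.
      * apply HWinj. lia.
Qed.

Lemma mu_aux_ge_0 Z N m : 0 <= mu_aux Z N m.
Proof.
  induction m as [|m IH]; simpl; [lra|].
  destruct (Req_dec (Cmod (Blk Z N m (Z m))) 0) as [H0 | H0].
  - rewrite H0, Rinv_0. lra.
  - pose proof (Cmod_ge_0 (Blk Z N m (Z m))).
    assert (0 < / Cmod (Blk Z N m (Z m))) by (apply Rinv_0_lt_compat; lra). lra.
Qed.

Lemma mu_aux_mul_le Z N m r c : 0 <= c ->
  (forall k, (k < m)%nat -> r <= c * Cmod (Blk Z N k (Z k))) ->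
  mu_aux Z N m * r <= INR m * c.
Proof.
  intros Hc. induction m as [|m IH]; intros Hr; [simpl; lra|].
  assert (Hm : / Cmod (Blk Z N m (Z m)) * r <= c).
  { destruct (Req_dec (Cmod (Blk Z N m (Z m))) 0) as [H0 | H0].
    - rewrite H0, Rinv_0. lra.
    - pose proof (Cmod_ge_0 (Blk Z N m (Z m))).
      rewrite Rmult_comm. apply Rle_div_l; [lra|]. apply Hr. lia. }
  assert (IH' := IH (fun k Hk => Hr k ltac:(lia))).
  simpl mu_aux. rewrite S_INR. lra.
Qed.

Section Admissible.

Variables (E : C -> Prop) (q : C -> C).
Hypothesis Hadm : admissible E q.

Lemma admissible_Cmod_q_bounds x : inU x -> 0 < Cmod (q x) <= 1.
Proof.
  intros Hx. destruct Hadm as [_ [_ [_ [Hconst Hholo]]]].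
  destruct (classic (exists zeta, Cmod zeta = 1 /\ cl E zeta)) as [Hcl | Hcl].
  - destruct (Hholo Hcl) as [_ [Hq _]]. specialize (Hq x Hx). lra.
  - rewrite (Hconst Hcl x), Cmod_1. lra.
Qed.

Lemma admissible_continuous_Cmod_q x :
  inU x -> @continuous Cabs R_UniformSpace (fun y => Cmod (q y)) x.
Proof.
  intros Hx. destruct Hadm as [_ [_ [_ [Hconst Hholo]]]].
  destruct (classic (exists zeta, Cmod zeta = 1 /\ cl E zeta)) as [Hcl | Hcl].
  - destruct (Hholo Hcl) as [Hq _].
    apply (@continuous_comp Cabs C_UniformSpace R_UniformSpace q Cmod).
    + apply (ex_derive_continuous (K := C_AbsRing) (V := C_NormedModule)), Hq, Hx.
    + apply (filterlim_norm (V := C_NormedModule)).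
  - apply (continuous_ext (fun _ : Cabs => Cmod 1)); [|apply continuous_const].
    intros y. rewrite (Hconst Hcl y). reflexivity.
Qed.

Lemma Vol_le_Vn m W : (forall j, (j < m)%nat -> E (W j)) -> Vol q W m <= Vn E q m.
Proof.
  intros HW. apply (real_Lub_Rbar_ub _ 1); [|exists W; split; auto].
  intros y [W' [HW' ->]]. apply Vol_le_1. intros j Hj.
  assert (HU : inU (W' j)) by (apply Hadm, HW', Hj).
  split; [exact HU | apply admissible_Cmod_q_bounds, HU].
Qed.

Lemma Vol_le_Vn_cl m Z :
  (forall j, (j < m)%nat -> cl E (Z j) /\ inU (Z j)) -> Vol q Z m <= Vn E q m.
Proof.
  intros HZ. apply Rle_plus_epsilon. intros eps Heps.
  assert (Hcont : @continuous Cabs_seq R_UniformSpace (fun W => Vol q W m) Z).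
  { apply continuous_Vol. intros j Hj. destruct (HZ j Hj) as [_ HU].
    split; [exact HU | apply admissible_continuous_Cmod_q, HU]. }
  destruct (Hcont _ (locally_ball (Vol q Z m) (mkposreal eps Heps))) as [d Hd].
  destruct (cl_approx E Z m d (cond_pos d) (fun j Hj => proj1 (HZ j Hj))) as [W [HWE HWd]].
  assert (Hclose : Rabs (Vol q W m - Vol q Z m) < eps) by exact (Hd W HWd).
  apply Rabs_def2 in Hclose. pose proof (Vol_le_Vn m W HWE). lra.
Qed.

Lemma Vn_pos m : 0 < Vn E q m.
Proof.
  destruct (infinite_set_distinct_pts E m (proj1 (proj2 Hadm))) as [W [HWE HWinj]].
  apply Rlt_le_trans with (Vol q W m); [|apply Vol_le_Vn, HWE].
  apply Vol_pos; [|exact HWinj].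
  intros j Hj. assert (HU : inU (W j)) by (apply Hadm, HWE, Hj).
  split; [exact HU | apply admissible_Cmod_q_bounds, HU].
Qed.

Lemma Cmod_q_le_qnorm x : cl E x -> inU x -> Cmod (q x) <= qnorm E q.
Proof.
  intros Hcl Hx. apply Rle_plus_epsilon. intros eps Heps.
  destruct (admissible_continuous_Cmod_q x Hx _ (locally_ball _ (mkposreal eps Heps)))
    as [d Hd].
  destruct (Hcl d (cond_pos d)) as [w [Ew Hw]].
  assert (Hclose : Rabs (Cmod (q w) - Cmod (q x)) < eps) by exact (Hd w Hw).
  assert (Hqw : Cmod (q w) <= qnorm E q).
  { apply (real_Lub_Rbar_ub _ 1); [|exists w; split; auto].
    intros y [w' [Ew' ->]]. apply admissible_Cmod_q_bounds, Hadm, Ew'. }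
  apply Rabs_def2 in Hclose. lra.
Qed.

Lemma extremal_Cmod_Bq_le z zeta n w k :
  (forall j, (j < n)%nat -> cl E (z j) /\ inU (z j)) ->
  (forall j, (j < S n)%nat -> cl E (zeta j) /\ inU (zeta j)) ->
  Vol q z n = Vn E q n -> Vol q zeta (S n) = Vn E q (S n) ->
  E w -> (k <= n)%nat ->
  Cmod (Bq q z n w) <= Cmod (q (zeta k)) * Cmod (Blk zeta (S n) k (zeta k)).
Proof.
  intros Hz Hzeta Hvz Hvzeta Ew Hk.
  assert (Hext : Vn E q n * Cmod (Bq q z n w) <= Vn E q (S n)).
  { rewrite <- Hvz, <- Vol_set_pt. apply Vol_le_Vn_cl.
    intros j Hj. unfold set_pt. destruct (Nat.eqb_spec j n).
    - split; [apply cl_of_mem, Ew | apply Hadm, Ew].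
    - apply Hz. lia. }
  assert (Hdel : Vn E q (S n) <=
                 Cmod (q (zeta k)) * Cmod (Blk zeta (S n) k (zeta k)) * Vn E q n).
  { rewrite <- Hvzeta, (Vol_delete_pt q zeta n k Hk).
    apply Rmult_le_compat_l; [apply Rmult_le_pos; apply Cmod_ge_0|].
    apply Vol_le_Vn_cl. intros j Hj. unfold delete_pt.
    destruct (Nat.ltb j k); apply Hzeta; lia. }
  apply (Rmult_le_reg_l (Vn E q n)); [apply Vn_pos|]. lra.
Qed.

End Admissible.

Theorem proposition3p6 (E : C -> Prop) (q : C -> C) (n : nat)
  (z zeta : nat -> C) :
  admissible E q ->
  (forall j, (j < n)%nat -> cl E (z j) /\ inU (z j)) ->
  (forall j, (j < S n)%nat -> cl E (zeta j) /\ inU (zeta j)) ->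
  Vol q z n = Vn E q n ->
  Vol q zeta (S n) = Vn E q (S n) ->
  mu zeta (S n) * Msup E q z n <= INR (S n) * qnorm E q.
Proof.
  intros Hadm Hz Hzeta Hvz Hvzeta.
  destruct (proj1 (proj2 Hadm) nil) as [w0 [Ew0 _]].
  assert (Hqnorm : 0 <= qnorm E q).
  { destruct (Hzeta 0%nat ltac:(lia)) as [Hcl HU].
    apply Rle_trans with (Cmod (q (zeta 0%nat))); [apply Cmod_ge_0|].
    apply Cmod_q_le_qnorm; assumption. }
  apply (Rmult_real_Lub_Rbar_le _ _ _ (Cmod (Bq q z n w0))).
  - apply mu_aux_ge_0.
  - exists w0. split; auto.
  - intros r [w [Ew ->]]. apply mu_aux_mul_le; [exact Hqnorm|]. intros k Hk.
    apply Rle_trans with (Cmod (q (zeta k)) * Cmod (Blk zeta (S n) k (zeta k))).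
    + apply (extremal_Cmod_Bq_le E q Hadm z zeta n w k); auto. lia.
    + destruct (Hzeta k Hk) as [Hcl HU].
      apply Rmult_le_compat_r; [apply Cmod_ge_0 | apply Cmod_q_le_qnorm; assumption].
Qed.
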